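(* Let $k\ge1$, $t\ge0$ and $n\ge k+t$ be integers, and let $F$ be a monotone $t$-admissible $k$-CNF formula on $n$ variables with $|\mathrm{sat}_t(F)|=S(n,t,k)$. Suppose no clause of $F$ is redundant, i.e. removing any single clause from $F$ yields a formula that is not $t$-admissible. Then every clause of $F$ has width exactly $k$.
   Context: A $k$-CNF formula is a conjunction of clauses (disjunctions of literals) each of width (number of literals) at most $k$; it is monotone if no literal is negated. $\mathrm{sat}_t(F)$ is the set of satisfying assignments of Hamming weight exactly $t$; $F$ is $t$-admissible if it has no satisfying assignment of Hamming weight less than $t$; $S(n,t,k)$ is the maximum of $|\mathrm{sat}_t(F)|$ over all $t$-admissible $k$-CNF formulas $F$ on $n$ variables. *)

From mathcomp Require Import all_boot.
Set Implicit Arguments. Unset Strict Implicit. Unset Printing Implicit Defensive.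

(* A literal is a pair (i, b): b = true is the positive
   literal x_i, b = false the negative literal ~x_i.  An assignment is identified with the set of variables set to true,
   so its Hamming weight is its cardinality. *)
Definition literal n := ('I_n * bool)%type.
Definition clause n := {set literal n}.
Definition cnf n := {set clause n}.
Definition assignment n := {set 'I_n}.

Definition sat_lit n (a : assignment n) (l : literal n) : bool :=
  (l.1 \in a) == l.2.
Definition sat_clause n (a : assignment n) (C : clause n) : bool :=
  [exists l in C, sat_lit a l].
Definition sat_cnf n (F : cnf n) (a : assignment n) : bool :=
  [forall C in F, sat_clause a C].

Definition width n (C : clause n) : nat := #|C|.

Definition is_kCNF n (k : nat) (F : cnf n) : bool :=
  [forall C in F, width C <= k].

Definition monotone n (F : cnf n) : bool :=
  [forall C in F, forall l in C, l.2].

Definition sat_t n (t : nat) (F : cnf n) : {set assignment n} :=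
  [set a : assignment n | sat_cnf F a & #|a| == t].

Definition admissible n (t : nat) (F : cnf n) : bool :=
  [forall a : assignment n, (#|a| < t) ==> ~~ sat_cnf F a].

Definition S (n t k : nat) : nat :=
  \max_(F : cnf n | is_kCNF k F && admissible t F) #|sat_t t F|.

From mathcomp Require Import all_boot zify.

Set Implicit Arguments.
Unset Strict Implicit.
Unset Printing Implicit Defensive.

(* If a clause C of width < k were present, irredundancy yields an assignment b
   of weight < t satisfying F without C; b misses every variable of C.  Pad b
   to a set S0 of exactly t variables still avoiding C, and replace C by the
   clauses C + x (x in S0).  The new formula is still a t-admissible k-CNF: an
   assignment satisfying it either satisfies C, hence F, or contains S0.  By
   monotonicity it keeps every weight-t solution of F and gains S0, so it beats
   the maximum S(n, t, k). *)

Lemma exists_set_between (T : finType) (B U : {set T}) m :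
  B \subset U -> #|B| <= m <= #|U| ->
  exists S : {set T}, [/\ B \subset S, S \subset U & #|S| = m].
Proof.
move=> BU; elim: m => [|m IH] /andP [Bm mU].
  by exists B; split=> //; apply/eqP; rewrite -leqn0.
have [eqBm | ltBm] := eqVneq #|B| m.+1; first by exists B.
have [S [BS SU cS]] : exists S : {set T}, [/\ B \subset S, S \subset U & #|S| = m].
  by apply: IH; rewrite (ltnW mU) andbT -ltnS ltn_neqAle ltBm.
have : 0 < #|U :\: S| by rewrite cardsDS // cS subn_gt0.
rewrite card_gt0 => /set0Pn [x]; rewrite inE => /andP [xS xU].
exists (x |: S); split; first by rewrite (subset_trans BS) // subsetUr.
  by rewrite subUset sub1set xU SU.
by rewrite cardsU1 xS cS.
Qed.

Section Formulas.

Variable n : nat.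
Implicit Types (a : assignment n) (C : clause n) (F G : cnf n) (X : {set 'I_n}).

Definition vars C : {set 'I_n} := [set l.1 | l in C].

Lemma card_vars C : #|vars C| <= width C.
Proof. exact: leq_imset_card. Qed.

Lemma monotone_clause F C l : monotone F -> C \in F -> l \in C -> l.2.
Proof. by move=> /forallP /(_ C) /implyP FC /FC /forallP /(_ l) /implyP. Qed.

Lemma monotoneS F G : G \subset F -> monotone F -> monotone G.
Proof.
move=> GF monF; apply/forallP => C; apply/implyP => CG.
by apply/forallP => l; apply/implyP; apply: monotone_clause (subsetP GF C CG).
Qed.

Lemma sat_positive_clause a C :
  {in C, forall l : literal n, l.2} -> sat_clause a C = ~~ (a \subset ~: vars C).
Proof.
move=> posC; rewrite -disjoints_subset disjoint_sym -setI_eq0.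
apply/existsP/set0Pn => [[l /andP [lC]] | [x]].
  rewrite /sat_lit posC // eqb_id => la.
  by exists l.1; rewrite !inE la andbT; apply: imset_f.
rewrite !inE => /andP [/imsetP [l lC ->] la].
by exists l; rewrite lC /sat_lit posC // eqb_id.
Qed.

Lemma sat_cnf_monotone F a a' :
  monotone F -> a \subset a' -> sat_cnf F a -> sat_cnf F a'.
Proof.
move=> monF aa' /forallP satF; apply/forallP => C; apply/implyP => CF.
have posC : {in C, forall l : literal n, l.2} by move=> l; apply: monotone_clause CF.
move: (implyP (satF C) CF); rewrite !sat_positive_clause //.
by apply: contra; apply: subset_trans.
Qed.

Lemma sat_cnfP F a : reflect {in F, forall C, sat_clause a C} (sat_cnf F a).
Proof.
apply: (iffP forallP) => [satF C CF | satF C]; first exact: implyP (satF C) CF.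
by apply/implyP; apply: satF.
Qed.

Lemma sat_cnf_setD1 F C a :
  sat_cnf (F :\ C) a -> sat_clause a C -> sat_cnf F a.
Proof.
move=> /sat_cnfP satFC satC; apply/sat_cnfP => D DF.
by have [-> // | DC] := eqVneq D C; apply: satFC; rewrite !inE DC.
Qed.

Lemma admissible_setD1_unsat t F C a :
  admissible t F -> #|a| < t -> sat_cnf (F :\ C) a -> ~~ sat_clause a C.
Proof.
move=> /forallP /(_ a) admF lt_at satFC; apply: contraL (implyP admF lt_at).
by move/(sat_cnf_setD1 satFC) => ->.
Qed.

Lemma sat_t_le_S k t F :
  is_kCNF k F -> admissible t F -> #|sat_t t F| <= S n t k.
Proof.
by move=> kF admF; apply: (leq_bigmax_cond (F := fun F => #|sat_t t F|)); rewrite kF.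
Qed.

Definition split_clause F C X : cnf n :=
  (F :\ C) :|: [set (x, true) |: C | x in X].

Lemma split_clauseP F C X D :
  reflect (D \in F :\ C \/ exists2 x, x \in X & D = (x, true) |: C)
          (D \in split_clause F C X).
Proof.
rewrite !inE; apply: (iffP orP) => -[DF | DX]; [by left | | by left | ].
  by right; apply/imsetP.
by right; apply/imsetP.
Qed.

Lemma sat_split_clause F C X a :
  sat_cnf (split_clause F C X) a =
  sat_cnf (F :\ C) a && [forall x in X, sat_clause a ((x, true) |: C)].
Proof.
apply/sat_cnfP/andP => [satF' | [/sat_cnfP satFC /forall_inP satX] D].
  split; first by apply/sat_cnfP => D DF; apply: satF'; apply/split_clauseP; left.
  by apply/forall_inP => x xX; apply: satF'; apply/split_clauseP; right; exists x.
case/split_clauseP => [/satFC // | [x xX ->]]; exact: satX.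
Qed.

Lemma split_clause_kCNF k F C X :
  width C < k -> is_kCNF k F -> is_kCNF k (split_clause F C X).
Proof.
move=> ltCk /forall_inP kF; apply/forall_inP => D /split_clauseP [| [x _ ->]].
  by rewrite inE => /andP [_ /kF].
by rewrite /width cardsU1 (leq_trans _ ltCk) // -add1n leq_add2r leq_b1.
Qed.

Lemma split_clause_admissible t F C X :
  #|X| = t -> admissible t F -> admissible t (split_clause F C X).
Proof.
move=> cX /forallP admF; apply/forallP => a; apply/implyP => lt_at.
apply/negP; rewrite sat_split_clause => /andP [satFC /forall_inP satX].
have [satC | unsatC] := boolP (sat_clause a C).
  by move: (implyP (admF a) lt_at); rewrite (sat_cnf_setD1 satFC satC).
have /subset_leq_card : X \subset a.
  apply/subsetP => x /satX /existsP [l]; rewrite !inE => /andP [/orP [/eqP -> |]].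
    by rewrite /sat_lit eqb_id.
  by move=> lC sat_l; case/negP: unsatC; apply/existsP; exists l; rewrite lC.
by rewrite cX leqNgt lt_at.
Qed.

Lemma sat_t_split_clause t F C X :
  C \in F -> sat_t t F \subset sat_t t (split_clause F C X).
Proof.
move=> CF; apply/subsetP => a; rewrite !inE => /andP [/sat_cnfP satF ->].
rewrite andbT sat_split_clause; apply/andP; split.
  by apply/sat_cnfP => D; rewrite inE => /andP [_ /satF].
apply/forall_inP => x _; case/existsP: (satF C CF) => l /andP [lC sat_l].
by apply/existsP; exists l; rewrite !inE lC orbT.
Qed.

Lemma sat_split_clause_self F C X :
  sat_cnf (F :\ C) X -> sat_cnf (split_clause F C X) X.
Proof.
move=> satFC; rewrite sat_split_clause satFC; apply/forall_inP => x xX.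
by apply/existsP; exists (x, true); rewrite !inE eqxx /= /sat_lit /= xX.
Qed.

End Formulas.

Theorem lemma6 (k t n : nat) (F : cnf n) :
  1 <= k -> k + t <= n ->
  monotone F -> is_kCNF k F -> admissible t F ->
  #|sat_t t F| = S n t k ->
  (forall C, C \in F -> ~~ admissible t (F :\ C)) ->
  forall C, C \in F -> width C = k.
Proof.
move=> _ ktn monF kF admF optF irrF C CF.
apply/eqP; rewrite eqn_leq (forall_inP kF C CF) /= leqNgt; apply/negP => ltCk.
have posC : {in C, forall l : literal n, l.2} by move=> l; apply: monotone_clause CF.
have /forallPn [b] := irrF C CF; rewrite negb_imply negbK => /andP [lt_bt satFCb].
have bU : b \subset ~: vars C.
  by move: (admissible_setD1_unsat admF lt_bt satFCb); rewrite sat_positive_clause ?negbK.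
have [S0 [bS0 S0U cS0]] :
    exists S0 : {set 'I_n}, [/\ b \subset S0, S0 \subset ~: vars C & #|S0| = t].
  apply: exists_set_between bU _; rewrite ltnW //= cardsCs setCK card_ord.
  by have := card_vars C; move: ltCk ktn; rewrite /width; lia.
have satFCS0 : sat_cnf (F :\ C) S0.
  by apply: sat_cnf_monotone satFCb => //; apply: monotoneS monF; apply: subD1set.
have unsatFS0 : ~~ sat_cnf F S0.
  by apply: contraL S0U => /sat_cnfP /(_ C CF); rewrite sat_positive_clause.
have gain : sat_t t F \proper sat_t t (split_clause F C S0).
  apply/properP; split; first exact: sat_t_split_clause.
  by exists S0; rewrite !inE ?sat_split_clause_self // cS0 eqxx andbT.
have := sat_t_le_S (split_clause_kCNF S0 ltCk kF) (split_clause_admissible C cS0 admF).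
by rewrite -optF leqNgt proper_card.
Qed.
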